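(* Let $\mathcal G\le\mathcal T$ and $\mathcal I$ be as in the context, with $\mathcal G$ acting on $\mathcal I$ by $(a_{ij})\cdot C_A=C_{(a_{ij})\cdot A}$. Form the semidirect products $U(M(\rho,k))\rtimes\mathcal T$ with multiplication $(A,a)(B,b)=(A\,(a\cdot B),ab)$ and $\mathcal I\rtimes\mathcal G$ with multiplication $(C_A,a)(C_B,b)=(C_AC_{a\cdot B},ab)$, and let $D_0=\{({\rm diag}(d_1,\dots,d_n),(d_i^{-1}d_j)_{i\rho j}) : d_i\in k^*\}$, a normal subgroup of $U(M(\rho,k))\rtimes\mathcal T$. Then the map $\Psi:\mathcal I\rtimes\mathcal G\to (U(M(\rho,k))\rtimes\mathcal T)/D_0$, $\Psi(C_A,(a_{ij}))=\overline{(A,(a_{ij}))}$, is well defined and is a group isomorphism.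
   Context: Let $k$ be a field, $n\ge1$, $\rho$ a preorder on $\{1,\dots,n\}$, $M(\rho,k)$ the subalgebra of $M_n(k)$ of matrices with $(i,j)$-entry $0$ whenever $(i,j)\notin\rho$, $U(M(\rho,k))$ its unit group. $i\sim j$ iff $i\rho j$ and $j\rho i$; $\mathcal C$ is the set of classes, $\hat i$ the class of $i$, ordered by $\hat i\le\hat j$ iff $i\rho j$. $\mathcal T$ is the group (entrywise product) of families $(a_{ij})_{i\rho j}$ in $k^*$ with $a_{ij}a_{jr}=a_{ir}$ whenever $i\rho j$, $j\rho r$; for $(a_{ij})\in\mathcal T$ and $A=(\alpha_{ij})\in M(\rho,k)$, $(a_{ij})\cdot A$ has $(i,j)$-entry $a_{ij}\alpha_{ij}$ if $i\rho j$ and $0$ otherwise. A class $\alpha\in\mathcal C$ is isolated if $\alpha\le\beta$ or $\beta\le\alpha$ implies $\beta=\alpha$. $\Delta$ is the undirected graph whose vertices are the $i\in\{1,\dots,n\}$ with $\hat i$ not isolated, with an edge between $i,j$ iff $\hat i\neq\hat j$ and $\hat i,\hat j$ are comparable. Let $\Delta_1,\dots,\Delta_z$ be its connected components and choose a spanning tree $T_\ell$ of each $\Delta_\ell$. $\mathcal G$ is the subgroup of $\mathcal T$ of those $(a_{ij})_{i\rho j}$ with $a_{ij}=1$ whenever $i\rho j$ and either $i,j$ are joined by an edge of some $T_\ell$, or $i,j$ both lie in the same isolated class. $\mathcal I=\{C_A : A\in U(M(\rho,k))\}$ with $C_A(X)=AXA^{-1}$ is the group of inner automorphisms of $M(\rho,k)$.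 $\overline{y}$ denotes the class modulo $D_0$. *)

From HB Require Import structures.
From mathcomp Require Import all_boot all_order all_algebra.
Set Implicit Arguments. Unset Strict Implicit. Unset Printing Implicit Defensive.
Import GRing.Theory.
Local Open Scope ring_scope.

Section Defs.
Variables (k : fieldType) (n : nat) (rho : rel 'I_n).

Definition inM (X : 'M[k]_n) : bool :=
  [forall i, forall j, ~~ rho i j ==> (X i j == 0)].

Definition inU (A : 'M[k]_n) : bool :=
  [&& inM A, A \in unitmx & inM (invmx A)].

(* Families (a_ij)_{i rho j} encoded as n x n matrices whose entries off rho are 1. *)
Definition inT (a : 'M[k]_n) : bool :=
  [forall i, forall j, if rho i j then a i j != 0 else a i j == 1] &&
  [forall i, forall j, forall r, rho i j && rho j r ==> (a i j * a j r == a i r)].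

Definition famM (a b : 'M[k]_n) : 'M[k]_n := \matrix_(i, j) (a i j * b i j).
Definition famV (a : 'M[k]_n) : 'M[k]_n := \matrix_(i, j) (a i j)^-1.
Definition fam1 : 'M[k]_n := const_mx 1.

Definition actM (a A : 'M[k]_n) : 'M[k]_n :=
  \matrix_(i, j) (if rho i j then a i j * A i j else 0).

Definition inUT (x : 'M[k]_n * 'M[k]_n) : bool := inU x.1 && inT x.2.
Definition sdmul (x y : 'M[k]_n * 'M[k]_n) : 'M[k]_n * 'M[k]_n :=
  (x.1 *m actM x.2 y.1, famM x.2 y.2).
Definition sdone : 'M[k]_n * 'M[k]_n := (1%:M, fam1).
Definition sdinv (x : 'M[k]_n * 'M[k]_n) : 'M[k]_n * 'M[k]_n :=
  (actM (famV x.2) (invmx x.1), famV x.2).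

Definition D0elt (d : 'I_n -> k) : 'M[k]_n * 'M[k]_n :=
  (diag_mx (\row_i d i),
   \matrix_(i, j) (if rho i j then (d i)^-1 * d j else 1)).
Definition inD0 (x : 'M[k]_n * 'M[k]_n) : Prop :=
  exists d : 'I_n -> k, (forall i, d i != 0) /\ x = D0elt d.

Definition modD0 (x y : 'M[k]_n * 'M[k]_n) : Prop :=
  exists2 d, inD0 d & y = sdmul x d.

Definition Cmap (A : 'M[k]_n) (X : 'M[k]_n) : 'M[k]_n := A *m X *m invmx A.
Definition autEq (f g : 'M[k]_n -> 'M[k]_n) : Prop :=
  forall X, inM X -> f X = g X.

Definition equivP (i j : 'I_n) : bool := rho i j && rho j i.
Definition compar (i j : 'I_n) : bool := rho i j || rho j i.
Definition isolated (i : 'I_n) : bool :=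
  [forall j, compar i j ==> equivP i j].
Definition DeltaE : rel 'I_n := fun i j => ~~ equivP i j && compar i j.

(* F is the union of spanning trees T_l of the connected components of Delta:
   a symmetric set of Delta-edges with the same connectivity as Delta, minimal
   for this property (every edge of F is a bridge of F). *)
Definition removeE (F : rel 'I_n) (u v : 'I_n) : rel 'I_n :=
  fun x y => F x y && ~~ ((x == u) && (y == v)) && ~~ ((x == v) && (y == u)).
Definition spanning_forest (F : rel 'I_n) : Prop :=
  [/\ symmetric F,
      (forall i j, F i j -> DeltaE i j),
      (forall i j, connect F i j = connect DeltaE i j) &
      (forall u v, F u v -> ~~ connect (removeE F u v) u v)].

Definition inG (F : rel 'I_n) (a : 'M[k]_n) : bool :=
  inT a &&
  [forall i, forall j,
     rho i j && (F i j || (isolated i && equivP i j)) ==> (a i j == 1)].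

End Defs.

From Pilot Require Import Defs.
From HB Require Import structures.
From mathcomp Require Import all_boot all_order all_algebra ring.
Import GRing.Theory.
Local Open Scope ring_scope.
Set Implicit Arguments. Unset Strict Implicit. Unset Printing Implicit Defensive.

(* Two units of M(rho,k) induce the same inner automorphism of M(rho,k) iff
   they differ by a central diagonal factor diag(z), z constant along rho, and
   such a factor is absorbed by D_0. Since a family of T fixes diagonal
   matrices and acts multiplicatively on M(rho,k), this makes Psi a well
   defined homomorphism. The entries of G forced to be 1 (edges of the
   spanning forest and pairs inside isolated classes) are exactly those that
   fix the diagonal part of an element of D_0 up to a central factor: a
   diagonal d with d_i^-1 d_j = 1 there is constant along rho (injectivity),
   and any prescribed values of d_i^-1 d_j there can be realised, since
   equations along the edges of a forest can be solved vertex by vertex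
   (surjectivity). *)

Local Notation dg d := (diag_mx (\row_i d i)).

Lemma connect_invariant (T : finType) (U : Type) (e : rel T) (f : T -> U) :
  (forall x y, e x y -> f x = f y) -> forall x y, connect e x y -> f x = f y.
Proof.
move=> fe x _ /connectP[p e_p ->].
by elim: p x e_p => //= y p IHp x /andP[/fe-> /IHp].
Qed.

Section MatrixFacts.
Variable R : comUnitRingType.

Lemma mulmx1_invmx n (A B : 'M[R]_n) : A *m B = 1%:M -> invmx A = B.
Proof.
by move=> AB1; have [uA _] := mulmx1_unit AB1; rewrite -[invmx A]mulmx1 -AB1 mulKmx.
Qed.

Lemma invmxM n (A B : 'M[R]_n) :
  A \in unitmx -> B \in unitmx -> invmx (A *m B) = invmx B *m invmx A.
Proof. by move=> uA uB; apply: mulmx1_invmx; rewrite mulmxA mulmxK // mulmxV. Qed.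

Lemma mulmx_deltaE n (Z : 'M[R]_n) (i j p q : 'I_n) :
  (Z *m delta_mx i j) p q = Z p i * (q == j)%:R.
Proof.
rewrite mxE (bigD1 i) //= big1 ?addr0 => [|r /negbTE nri]; rewrite mxE.
  by rewrite eqxx.
by rewrite nri mulr0.
Qed.

Lemma mul_deltamxE n (Z : 'M[R]_n) (i j p q : 'I_n) :
  (delta_mx i j *m Z) p q = (p == i)%:R * Z j q.
Proof.
rewrite mxE (bigD1 j) //= big1 ?addr0 => [|r /negbTE nrj]; rewrite mxE.
  by rewrite eqxx andbT.
by rewrite nrj andbF mul0r.
Qed.

End MatrixFacts.

Section Diagonal.
Variables (k : fieldType) (n : nat).
Implicit Types (d e : 'I_n -> k) (A B : 'M[k]_n).

Lemma dgE d i j : dg d i j = if i == j then d i else 0.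
Proof. by rewrite !mxE; case: (i == j); rewrite ?mulr1n ?mulr0n. Qed.

Lemma mul_dg d e : dg d *m dg e = dg (fun i => d i * e i).
Proof. by apply/matrixP=> i j; rewrite mulmx_diag !dgE !mxE. Qed.

Lemma dg1 : dg (fun=> 1) = 1%:M :> 'M[k]_n.
Proof. by apply/matrixP=> i j; rewrite dgE !mxE; case: (i == j). Qed.

Lemma mul_dgV d : (forall i, d i != 0) -> dg d *m dg (fun i => (d i)^-1) = 1%:M.
Proof.
by move=> d_neq0; rewrite mul_dg -dg1; congr diag_mx; apply/rowP=> i; rewrite !mxE mulfV.
Qed.

Lemma mul_Vdg d : (forall i, d i != 0) -> dg (fun i => (d i)^-1) *m dg d = 1%:M.
Proof.
by move=> d_neq0; rewrite mul_dg -dg1; congr diag_mx; apply/rowP=> i; rewrite !mxE mulVf.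
Qed.

Lemma invmx_dg d : (forall i, d i != 0) -> invmx (dg d) = dg (fun i => (d i)^-1).
Proof. by move=> d_neq0; apply/mulmx1_invmx/mul_dgV. Qed.

Lemma unitmx_dg d : (forall i, d i != 0) -> dg d \in unitmx.
Proof. by move=> d_neq0; have [] := mulmx1_unit (mul_dgV d_neq0). Qed.

Lemma CmapM A B X :
  A \in unitmx -> B \in unitmx -> Cmap (A *m B) X = Cmap A (Cmap B X).
Proof. by move=> uA uB; rewrite /Cmap invmxM // !mulmxA. Qed.

End Diagonal.

Section Preorder.
Variables (n : nat) (rho : rel 'I_n).
Hypotheses (rho_refl : reflexive rho) (rho_trans : transitive rho).

Definition rho_const (T : Type) (z : 'I_n -> T) := forall i j, rho i j -> z i = z j.

Lemma equiv_rho_l i j m : Defs.equivP rho i j -> rho i m = rho j m.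
Proof.
case/andP=> rij rji; apply/idP/idP => [rim|rjm].
  exact: rho_trans rji rim.
exact: rho_trans rij rjm.
Qed.

Lemma equiv_rho_r i j m : Defs.equivP rho i j -> rho m i = rho m j.
Proof.
case/andP=> rij rji; apply/idP/idP => [rmi|rmj].
  exact: rho_trans rmi rij.
exact: rho_trans rmj rji.
Qed.

Lemma DeltaE_sym : symmetric (DeltaE rho).
Proof.
by move=> i j; rewrite /DeltaE /Defs.equivP /compar [rho i j && _]andbC [rho i j || _]orbC.
Qed.

Lemma DeltaE_not_isolated i j : DeltaE rho i j -> ~~ isolated rho i.
Proof. by move=> Dij; apply/forallPn; exists j; rewrite negb_imply andbC. Qed.

Lemma DeltaE_equiv i j m :
  Defs.equivP rho i j -> DeltaE rho i m = DeltaE rho j m.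
Proof.
by move=> eij; rewrite /DeltaE /Defs.equivP /compar (equiv_rho_l m eij) (equiv_rho_r m eij).
Qed.

Lemma isolated_equiv i j : Defs.equivP rho i j -> isolated rho i = isolated rho j.
Proof.
move=> eij; apply: eq_forallb => m.
by rewrite /compar /Defs.equivP (equiv_rho_l m eij) (equiv_rho_r m eij).
Qed.

Definition class_rep (i : 'I_n) : 'I_n := odflt i [pick l | Defs.equivP rho i l].

Lemma class_rep_rho i : rho (class_rep i) i.
Proof. by rewrite /class_rep; case: pickP => [l /andP[]|_] /=. Qed.

Lemma class_rep_equiv i j : Defs.equivP rho i j -> class_rep i = class_rep j.
Proof.
move=> eij; rewrite /class_rep.
rewrite (eq_pick (Q := fun l => Defs.equivP rho j l)) => [|l].
  by case: pickP => [//|/(_ j)]; rewrite /Defs.equivP rho_refl.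
by rewrite /Defs.equivP (equiv_rho_l l eij) (equiv_rho_r l eij).
Qed.

End Preorder.

Section ForestPotential.
Variables (k : fieldType) (n : nat).
Implicit Types (E : rel 'I_n) (w : 'I_n -> 'I_n -> k).

Definition forest_edges E := forall u v, E u v -> ~~ connect (removeE E u v) u v.

Lemma removeE_sub E u v : subrel (removeE E u v) E.
Proof. by move=> x y /andP[/andP[]]. Qed.

Lemma removeE_sym E u v : symmetric E -> symmetric (removeE E u v).
Proof.
move=> E_sym x y; rewrite /removeE E_sym.
by case: (x == u); case: (y == v); case: (x == v); case: (y == u); rewrite ?andbT ?andbF.
Qed.

Lemma removeE_forest E u v : forest_edges E -> forest_edges (removeE E u v).
Proof.
move=> E_forest x y /removeE_sub Exy; apply: contra (E_forest x y Exy).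
apply: connect_sub => a b /andP[/andP[/removeE_sub Eab nxy] nyx].
by apply: connect1; rewrite /removeE Eab nxy nyx.
Qed.

Lemma card_removeE E u v : E u v ->
  (#|[pred p : 'I_n * 'I_n | removeE E u v p.1 p.2]|
     < #|[pred p : 'I_n * 'I_n | E p.1 p.2]|)%N.
Proof.
move=> Euv; apply/proper_card/properP; split.
  by apply/subsetP=> -[x y]; rewrite !inE; apply: removeE_sub.
by exists (u, v); rewrite !inE //= /removeE !eqxx !andbF.
Qed.

(* The potential of the part not connected to u is rescaled so that the
   equation along the removed bridge uv holds. *)
Lemma potential_removeE E w u v d :
  symmetric E -> E u v -> ~~ connect (removeE E u v) u v ->
  w u v * w v u = 1 -> (forall i, d i != 0) ->
  (forall x y, removeE E u v x y -> d y = d x * w x y) ->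
  exists2 d' : 'I_n -> k, (forall i, d' i != 0) &
    (forall x y, E x y -> d' y = d' x * w x y).
Proof.
move=> E_sym Euv nuv wK d_neq0 dP; set E' := removeE E u v.
have wuv_neq0 : w u v != 0 by apply: contra_eq_neq wK => ->; rewrite mul0r eq_sym oner_eq0.
set c := d u * w u v / d v.
have c_neq0 : c != 0 by rewrite !mulf_neq0 ?invr_neq0.
exists (fun x => if connect E' u x then d x else d x * c).
  by move=> i; case: ifP => _; [exact: d_neq0 | exact: mulf_neq0].
move=> x y Exy; case E'xy : (E' x y).
  have E'_sym : connect_sym E' by apply/sym_connect_sym/removeE_sym.
  rewrite -(same_connect1r E'_sym E'xy u).
  by rewrite (dP _ _ E'xy); case: ifP => _; rewrite // mulrAC.
have [] : x = u /\ y = v \/ x = v /\ y = u.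
  move/negbT: E'xy; rewrite /E' /removeE Exy /= negb_and !negbK.
  by case/orP=> /andP[/eqP-> /eqP->]; [left | right].
- by case=> -> ->; rewrite (negbTE nuv) connect0 /c mulrCA mulfV ?mulr1.
- by case=> -> ->; rewrite (negbTE nuv) connect0 /c mulrCA mulfV // mulr1 -mulrA wK mulr1.
Qed.

Lemma forest_potential E w :
  symmetric E -> forest_edges E -> (forall u v, E u v -> w u v * w v u = 1) ->
  exists2 d : 'I_n -> k, (forall i, d i != 0) &
    (forall u v, E u v -> d v = d u * w u v).
Proof.
have [m] := ubnP #|[pred p : 'I_n * 'I_n | E p.1 p.2]|.
elim: m E => // m IH E ltEm E_sym E_forest wK.
case: (pickP [pred p : 'I_n * 'I_n | E p.1 p.2]) => [[u v] /= Euv | noE]; last first.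
  exists (fun=> 1) => [i|u v Euv]; first exact: oner_neq0.
  by have := noE (u, v); rewrite /= Euv.
have E'_lt : (#|[pred p : 'I_n * 'I_n | removeE E u v p.1 p.2]| < m)%N.
  by rewrite -ltnS; apply: leq_ltn_trans (card_removeE Euv) ltEm.
have E'_wK x y : removeE E u v x y -> w x y * w y x = 1.
  by move/removeE_sub; apply: wK.
have [d d_neq0 dP] :=
  IH _ E'_lt (removeE_sym u v E_sym) (removeE_forest E_forest) E'_wK.
exact: potential_removeE E_sym Euv (E_forest u v Euv) (wK u v Euv) d_neq0 dP.
Qed.

End ForestPotential.

Section MatrixAlgebra.
Variables (k : fieldType) (n : nat) (rho : rel 'I_n).
Hypotheses (rho_refl : reflexive rho) (rho_trans : transitive rho).
Implicit Types (X Y A B C P Q Z a b c : 'M[k]_n) (d z : 'I_n -> k).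

Lemma inMP X : reflect (forall i j, ~~ rho i j -> X i j = 0) (inM rho X).
Proof.
apply: (iffP forallP) => [XP i j nrij | X0 i].
  by have /forallP/(_ j)/implyP/(_ nrij)/eqP := XP i.
by apply/forallP=> j; apply/implyP=> nrij; rewrite X0.
Qed.

Lemma inM_dg d : inM rho (dg d).
Proof.
by apply/inMP=> i j; rewrite dgE; case: eqP => [->|//]; rewrite rho_refl.
Qed.

Lemma inM_delta i j : rho i j -> inM rho (delta_mx i j : 'M[k]_n).
Proof.
by move=> rij; apply/inMP=> p q; rewrite mxE; case: eqP => [->|]; case: eqP => [->|]; rewrite ?rij.
Qed.

Lemma inM_mul X Y : inM rho X -> inM rho Y -> inM rho (X *m Y).
Proof.
move=> /inMP X0 /inMP Y0; apply/inMP=> i j nrij; rewrite mxE big1 // => r _.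
case: (boolP (rho i r)) => [rir|/X0->]; last by rewrite mul0r.
by rewrite Y0 ?mulr0 //; apply: contra nrij; apply: rho_trans.
Qed.

Lemma inU_mul A B : inU rho A -> inU rho B -> inU rho (A *m B).
Proof.
move=> /and3P[mA uA mAV] /and3P[mB uB mBV].
by rewrite /inU invmxM // !inM_mul // unitmx_mul uA uB.
Qed.

Lemma inU_dg d : (forall i, d i != 0) -> inU rho (dg d).
Proof. by move=> d_neq0; rewrite /inU inM_dg unitmx_dg // invmx_dg // inM_dg. Qed.

Lemma inT_neq0 a i j : inT rho a -> rho i j -> a i j != 0.
Proof. by case/andP=> /forallP/(_ i)/forallP/(_ j) + _ rij; rewrite rij. Qed.

Lemma inT_out a i j : inT rho a -> ~~ rho i j -> a i j = 1.
Proof. by case/andP=> /forallP/(_ i)/forallP/(_ j) + _ /negbTE nrij; rewrite nrij => /eqP. Qed.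

Lemma inT_cocycle a i j r : inT rho a -> rho i j -> rho j r -> a i j * a j r = a i r.
Proof.
case/andP=> _ /forallP/(_ i)/forallP/(_ j)/forallP/(_ r)/implyP aP rij rjr.
by apply/eqP/aP; rewrite rij rjr.
Qed.

Lemma inT_diag a i : inT rho a -> a i i = 1.
Proof.
move=> Ta; have := inT_cocycle Ta (rho_refl i) (rho_refl i).
by move/(canRL (mulfK (inT_neq0 Ta (rho_refl i)))); rewrite divff // inT_neq0.
Qed.

Lemma inTP a :
  (forall i j, rho i j -> a i j != 0) -> (forall i j, ~~ rho i j -> a i j = 1) ->
  (forall i j r, rho i j -> rho j r -> a i j * a j r = a i r) -> inT rho a.
Proof.
move=> a_neq0 a_out aP; apply/andP; split.
  apply/forallP=> i; apply/forallP=> j.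
  by case: ifPn => [/a_neq0 | /a_out->].
apply/forallP=> i; apply/forallP=> j; apply/forallP=> r; apply/implyP.
by case/andP=> rij rjr; rewrite aP.
Qed.

Lemma actM_dg c d : (forall i, c i i = 1) -> actM rho c (dg d) = dg d.
Proof.
move=> c1; apply/matrixP=> i j; rewrite mxE dgE.
by case: eqP => [<-|_]; rewrite ?rho_refl ?c1 ?mul1r // mulr0 if_same.
Qed.

(* Multiplicativity of a . _ on M(rho,k) is the cocycle identity a_ir a_rj = a_ij. *)
Lemma actM_mul a X Y :
  inT rho a -> inM rho X -> inM rho Y -> actM rho a (X *m Y) = actM rho a X *m actM rho a Y.
Proof.
move=> Ta /inMP X0 /inMP Y0; apply/matrixP=> i j; rewrite !mxE.
case: ifPn => [rij | nrij].
  rewrite mulr_sumr; apply: eq_bigr => r _; rewrite !mxE.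
  case: (boolP (rho i r)) => [rir|/X0->]; last by rewrite !mul0r mulr0.
  case: (boolP (rho r j)) => [rrj|/Y0->]; last by rewrite !mulr0.
  by rewrite -(inT_cocycle Ta rir rrj); ring.
rewrite big1 // => r _; rewrite !mxE.
case: (boolP (rho i r)) => [rir|_]; last by rewrite mul0r.
case: (boolP (rho r j)) => [rrj|_]; last by rewrite mulr0.
by rewrite (rho_trans rir rrj) in nrij.
Qed.

Lemma unitmx_actM a B : inT rho a -> inU rho B -> actM rho a B \in unitmx.
Proof.
move=> Ta /and3P[mB uB mBV].
have: actM rho a B *m actM rho a (invmx B) = 1%:M.
  by rewrite -actM_mul // mulmxV // -dg1 actM_dg // => i; apply: inT_diag.
by case/mulmx1_unit.
Qed.

Lemma centralizer_inM Z : (forall X, inM rho X -> Z *m X = X *m Z) ->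
  Z = dg (fun i => Z i i) /\ rho_const rho (fun i => Z i i).
Proof.
move=> Zc; split.
  apply/matrixP=> i j; rewrite dgE; case: eqP => [->//|/eqP nij].
  have /matrixP/(_ i j) := Zc _ (inM_delta (rho_refl j)).
  by rewrite mulmx_deltaE mul_deltamxE eqxx (negbTE nij) mulr1 mul0r.
move=> i j rij; have /matrixP/(_ i j) := Zc _ (inM_delta rij).
by rewrite mulmx_deltaE mul_deltamxE !eqxx mulr1 mul1r.
Qed.

Lemma dg_comm_inM z X : rho_const rho z -> inM rho X -> dg z *m X = X *m dg z.
Proof.
move=> z_const /inMP X0; apply/matrixP=> i j; rewrite mul_diag_mx mul_mx_diag !mxE.
by case: (boolP (rho i j)) => [/z_const->|/X0->]; [exact: mulrC | rewrite mulr0 mul0r].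
Qed.

Lemma Cmap_mul_dg P z X : P \in unitmx -> (forall i, z i != 0) ->
  rho_const rho z -> inM rho X -> Cmap (P *m dg z) X = Cmap P X.
Proof.
move=> uP z_neq0 z_const mX; rewrite CmapM ?unitmx_dg //; congr Cmap.
by rewrite /Cmap dg_comm_inM // -mulmxA mulmxV ?unitmx_dg // mulmx1.
Qed.

Lemma autEq_Cmap_dg P Q : P \in unitmx -> Q \in unitmx ->
  autEq rho (Cmap P) (Cmap Q) ->
  exists z, [/\ forall i, z i != 0, rho_const rho z & Q = P *m dg z].
Proof.
move=> uP uQ PQ; set Z := invmx P *m Q.
have uZ : Z \in unitmx by rewrite unitmx_mul unitmx_inv uP.
have Zc X : inM rho X -> Z *m X = X *m Z.
  move=> mX; have /(congr1 (mulmx (invmx P))) := congr1 (mulmx^~ Q) (PQ X mX).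
  by rewrite /Cmap !mulmxA mulVmx // mul1mx mulmxKV // => ->.
have [eZ Z_const] := centralizer_inM Zc.
exists (fun i => Z i i); split=> //; last by rewrite -eZ mulKVmx.
move=> i; have /matrixP/(_ i i) := mulmxV uZ.
rewrite {1}eZ mul_diag_mx !mxE eqxx; apply: contra_eq_neq => ->.
by rewrite mul0r eq_sym oner_eq0.
Qed.

Lemma D0elt_diag d i : (forall i, d i != 0) -> (D0elt rho d).2 i i = 1.
Proof. by move=> d_neq0; rewrite mxE rho_refl mulVf. Qed.

Lemma D0elt_const d : (forall i, d i != 0) -> rho_const rho d ->
  (D0elt rho d).2 = fam1 k n.
Proof.
move=> d_neq0 d_const; apply/matrixP=> i j; rewrite !mxE.
by case: ifP => // /d_const->; rewrite mulVf.
Qed.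

Lemma famMx1 a : famM a (fam1 k n) = a.
Proof. by apply/matrixP=> i j; rewrite !mxE mulr1. Qed.

Lemma sdmul_D0elt X c d : (forall i, c i i = 1) ->
  sdmul rho (X, c) (D0elt rho d) = (X *m dg d, famM c (D0elt rho d).2).
Proof. by move=> c1; rewrite /sdmul /= actM_dg. Qed.

Lemma modD0_mul_dg X c z : (forall i, c i i = 1) -> (forall i, z i != 0) ->
  rho_const rho z -> modD0 rho (X, c) (X *m dg z, c).
Proof.
move=> c1 z_neq0 z_const; exists (D0elt rho z); first by exists z.
by rewrite sdmul_D0elt // D0elt_const // famMx1.
Qed.

Lemma inD0_inUT (x : 'M[k]_n * 'M[k]_n) : inD0 rho x -> inUT rho x.
Proof.
move=> [d [d_neq0 ->]]; rewrite /inUT inU_dg //=.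
apply: inTP => [i j rij | i j /negbTE nrij | i j r rij rjr]; rewrite !mxE.
- by rewrite rij mulf_neq0 ?invr_neq0.
- by rewrite nrij.
- by rewrite rij rjr (rho_trans rij rjr) mulrA mulfK.
Qed.

Lemma inD0_sdone : inD0 rho (@sdone k n).
Proof.
exists (fun=> 1); split=> [i|]; first exact: oner_neq0.
rewrite [RHS]surjective_pairing D0elt_const // => [|i]; last exact: oner_neq0.
by rewrite /= dg1.
Qed.

Lemma inD0_sdmul (x y : 'M[k]_n * 'M[k]_n) :
  inD0 rho x -> inD0 rho y -> inD0 rho (sdmul rho x y).
Proof.
move=> [d [d_neq0 ->]] [e [e_neq0 ->]].
exists (fun i => d i * e i); split=> [i|]; first by rewrite mulf_neq0.
rewrite [D0elt rho d]surjective_pairing sdmul_D0elt => [|i]; last exact: D0elt_diag.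
rewrite /= mul_dg; congr pair; apply/matrixP=> i j; rewrite !mxE.
by case: ifP => _; rewrite ?mulr1 // invfM mulrACA.
Qed.

Lemma inD0_sdinv (x : 'M[k]_n * 'M[k]_n) : inD0 rho x -> inD0 rho (sdinv rho x).
Proof.
move=> [d [d_neq0 ->]].
exists (fun i => (d i)^-1); split=> [i|]; first by rewrite invr_neq0.
rewrite /sdinv /= invmx_dg // actM_dg => [|i]; last by rewrite mxE D0elt_diag // invr1.
congr pair; apply/matrixP=> i j; rewrite !mxE.
by case: ifP => _; rewrite ?invr1 // invfM invrK mulrC.
Qed.

Lemma inD0_conj (g x : 'M[k]_n * 'M[k]_n) : inUT rho g -> inD0 rho x ->
  inD0 rho (sdmul rho (sdmul rho g x) (sdinv rho g)).
Proof.
case: g => A a /andP[/and3P[_ uA /inMP AV0] Ta] [d [d_neq0 ->]].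
exists d; split=> //.
rewrite sdmul_D0elt => [|i]; last exact: inT_diag.
rewrite /sdmul /sdinv /=.
have -> : actM rho (famM a (D0elt rho d).2) (actM rho (famV a) (invmx A)) =
          dg (fun i => (d i)^-1) *m invmx A *m dg d.
  apply/matrixP=> i j; rewrite mul_mx_diag mul_diag_mx !mxE.
  case: (boolP (rho i j)) => [rij|/AV0->]; last by rewrite !mulr0 mul0r.
  by field; rewrite d_neq0 (inT_neq0 Ta rij).
rewrite !mulmxA -(mulmxA A) mul_dgV // mulmx1 mulmxV // mul1mx.
congr pair; apply/matrixP=> i j; rewrite !mxE.
case: (boolP (rho i j)) => [rij|nrij]; first by field; rewrite d_neq0 (inT_neq0 Ta rij).
by rewrite (inT_out Ta nrij) invr1 !mulr1.
Qed.

Lemma autEq_actM a A B : inT rho a -> inU rho A -> inU rho B ->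
  autEq rho (Cmap A) (Cmap B) -> autEq rho (Cmap (actM rho a A)) (Cmap (actM rho a B)).
Proof.
move=> Ta UA /and3P[_ uB _]; have /and3P[mA uA _] := UA.
case/(autEq_Cmap_dg uA uB) => z [z_neq0 z_const ->] X mX.
rewrite actM_mul ?inM_dg // actM_dg => [|i]; last exact: inT_diag.
by rewrite Cmap_mul_dg // unitmx_actM.
Qed.

Lemma modD0_autEq a A B : inT rho a -> inU rho A -> inU rho B ->
  autEq rho (Cmap A) (Cmap B) -> modD0 rho (A, a) (B, a).
Proof.
move=> Ta /and3P[_ uA _] /and3P[_ uB _] /(autEq_Cmap_dg uA uB)[z [z_neq0 z_const ->]].
by apply: modD0_mul_dg => // i; apply: inT_diag.
Qed.

Lemma modD0_sdmul a b A B C : inT rho a -> inT rho b ->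
  inU rho A -> inU rho B -> inU rho C ->
  autEq rho (Cmap C) (fun X => Cmap A (Cmap (actM rho a B) X)) ->
  modD0 rho (C, famM a b) (sdmul rho (A, a) (B, b)).
Proof.
move=> Ta Tb /and3P[_ uA _] UB /and3P[_ uC _] CE.
have uAaB : A *m actM rho a B \in unitmx by rewrite unitmx_mul uA unitmx_actM.
have CAaB : autEq rho (Cmap C) (Cmap (A *m actM rho a B)).
  by move=> X mX; rewrite CmapM ?unitmx_actM // CE.
have [z [z_neq0 z_const AaBE]] := autEq_Cmap_dg uC uAaB CAaB.
rewrite /sdmul /= AaBE; apply: modD0_mul_dg => // i.
by rewrite mxE !inT_diag ?mulr1.
Qed.

End MatrixAlgebra.

Section SpanningForest.
Variables (k : fieldType) (n : nat) (rho : rel 'I_n) (F : rel 'I_n).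
Hypotheses (rho_refl : reflexive rho) (rho_trans : transitive rho).
Hypothesis F_forest : spanning_forest rho F.

Definition pinned i j := rho i j && (F i j || (isolated rho i && Defs.equivP rho i j)).

Lemma inG_pinned (a : 'M[k]_n) i j : inG rho F a -> pinned i j -> a i j = 1.
Proof. by case/andP=> _ /forallP/(_ i)/forallP/(_ j)/implyP aP /aP/eqP. Qed.

Lemma inGP (a : 'M[k]_n) :
  inT rho a -> (forall i j, pinned i j -> a i j = 1) -> inG rho F a.
Proof.
move=> Ta aP; rewrite /inG Ta; apply/forallP=> i; apply/forallP=> j.
by apply/implyP=> /aP->.
Qed.

Lemma pinned_const (T : Type) (f : 'I_n -> T) :
  (forall i j, pinned i j -> f i = f j) -> rho_const rho f.
Proof.
case: F_forest => F_sym F_Delta F_connect _ fP.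
have fF i j : F i j -> f i = f j.
  move=> Fij; have /andP[_ /orP[rij|rji]] := F_Delta _ _ Fij.
    by apply: fP; rewrite /pinned rij Fij.
  by apply/esym/fP; rewrite /pinned rji F_sym Fij.
have fDelta i j : DeltaE rho i j -> f i = f j.
  by move=> Dij; apply: (connect_invariant fF); rewrite F_connect connect1.
move=> i j rij; case: (boolP (Defs.equivP rho i j)) => [eij|neij]; last first.
  by apply: fDelta; rewrite /DeltaE neij /compar rij.
case: (boolP (isolated rho i)) => [iso|/forallPn[m]].
  by apply: fP; rewrite /pinned rij iso eij orbT.
rewrite negb_imply andbC => Dim.
have Djm : DeltaE rho j m by rewrite -(DeltaE_equiv rho_trans m eij).
by rewrite (fDelta i m) // (fDelta j m).
Qed.

(* Off the isolated classes the values are propagated along the forest F; on an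
   isolated class they are read off from a fixed representative. *)
Lemma pinned_potential (x : 'M[k]_n) : inT rho x ->
  exists2 d : 'I_n -> k, (forall i, d i != 0) &
    (forall i j, pinned i j -> d j = d i * x i j).
Proof.
case: F_forest => F_sym F_Delta _ F_bridges Tx.
pose w u v := if rho u v then x u v else (x v u)^-1.
have wK u v : F u v -> w u v * w v u = 1.
  move/F_Delta; rewrite /DeltaE /Defs.equivP /compar /w.
  case ruv : (rho u v); case rvu : (rho v u) => //= _.
    by rewrite mulfV // (inT_neq0 Tx ruv).
  by rewrite mulVf // (inT_neq0 Tx rvu).
have [dF dF_neq0 dFP] := forest_potential F_sym F_bridges wK.
exists (fun i => if isolated rho i then x (class_rep rho i) i else dF i).
  move=> i; case: ifP => _; last exact: dF_neq0.
  exact: inT_neq0 Tx (class_rep_rho rho_refl i).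
move=> i j /andP[rij /orP[Fij | /andP[iso eij]]].
  have Dij := F_Delta _ _ Fij; have Dji : DeltaE rho j i by rewrite DeltaE_sym.
  rewrite (negbTE (DeltaE_not_isolated Dij)) (negbTE (DeltaE_not_isolated Dji)).
  by rewrite (dFP _ _ Fij) /w rij.
rewrite -(isolated_equiv rho_trans eij) iso -(class_rep_equiv rho_refl rho_trans eij).
by rewrite (inT_cocycle Tx (class_rep_rho rho_refl i) rij).
Qed.

Lemma modD0_inG_inj (a b A B : 'M[k]_n) : inG rho F a -> inG rho F b ->
  inU rho A -> inU rho B -> modD0 rho (A, a) (B, b) ->
  autEq rho (Cmap A) (Cmap B) /\ a = b.
Proof.
move=> Ga Gb /and3P[_ uA _] _ [_ [d [d_neq0 ->]]].
have Ta : inT rho a by case/andP: Ga.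
rewrite (sdmul_D0elt rho_refl) => [|i]; last exact: (inT_diag rho_refl i Ta).
move/pair_equal_spec=> [-> Eb]; subst b; have d_const : rho_const rho d.
  apply: pinned_const => i j pij; have /andP[rij _] := pij.
  move: (inG_pinned Gb pij); rewrite !mxE rij (inG_pinned Ga pij) mul1r.
  by move/(canRL (mulVKf (d_neq0 i))) => ->; rewrite mulr1.
split; first by move=> X mX; rewrite (Cmap_mul_dg uA d_neq0 d_const mX).
by rewrite D0elt_const // famMx1.
Qed.

Lemma modD0_inG_surj (x : 'M[k]_n * 'M[k]_n) : inUT rho x ->
  exists A a, [/\ inU rho A, inG rho F a & modD0 rho (A, a) x].
Proof.
case: x => X x /andP[/= UX Tx].
have [d d_neq0 dP] := pinned_potential Tx.
pose a : 'M[k]_n := \matrix_(i, j) (if rho i j then x i j * d i / d j else 1).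
have Ta : inT rho a.
  apply: inTP => [i j rij | i j /negbTE nrij | i j r rij rjr]; rewrite !mxE.
  - by rewrite rij !mulf_neq0 ?invr_neq0 ?(inT_neq0 Tx rij).
  - by rewrite nrij.
  - rewrite rij rjr (rho_trans rij rjr) -(inT_cocycle Tx rij rjr).
    by field; rewrite !d_neq0.
exists (X *m dg (fun i => (d i)^-1)), a; split.
- by apply/inU_mul/inU_dg => // i; rewrite invr_neq0.
- apply: inGP => // i j pij; have /andP[rij _] := pij.
  by rewrite mxE rij (dP _ _ pij); field; rewrite d_neq0 (inT_neq0 Tx rij).
- exists (D0elt rho d); first by exists d.
  rewrite (sdmul_D0elt rho_refl) => [|i]; last exact: (inT_diag rho_refl i Ta).
  rewrite -mulmxA mul_Vdg // mulmx1; congr pair; apply/matrixP=> i j; rewrite !mxE.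
  case: ifPn => [rij|nrij]; last by rewrite (inT_out Tx nrij) mulr1.
  by field; rewrite !d_neq0.
Qed.

End SpanningForest.

Unset Implicit Arguments.

Theorem mainTheorem8 (k : fieldType) (n : nat) (rho : rel 'I_n)
  (Hn : (0 < n)%N) (Hrefl : reflexive rho) (Htrans : transitive rho)
  (F : rel 'I_n) (HF : spanning_forest rho F) :
  (* D_0 is a normal subgroup of U(M(rho,k)) x| T *)
  ((forall x : 'M[k]_n * 'M[k]_n, inD0 rho x -> inUT rho x) /\
   inD0 rho (@sdone k n) /\
   (forall x y : 'M[k]_n * 'M[k]_n, inD0 rho x -> inD0 rho y -> inD0 rho (sdmul rho x y)) /\
   (forall x : 'M[k]_n * 'M[k]_n, inD0 rho x -> inD0 rho (sdinv rho x)) /\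
   (forall g x : 'M[k]_n * 'M[k]_n, inUT rho g -> inD0 rho x ->
                inD0 rho (sdmul rho (sdmul rho g x) (sdinv rho g)))) /\
  (* the action of G on I, (a) . C_A = C_{a . A}, is well defined *)
  (forall (a A B : 'M[k]_n), inG rho F a -> inU rho A -> inU rho B ->
     autEq rho (Cmap A) (Cmap B) ->
     autEq rho (Cmap (actM rho a A)) (Cmap (actM rho a B))) /\
  (* Psi is well defined *)
  (forall (a A B : 'M[k]_n), inG rho F a -> inU rho A -> inU rho B ->
     autEq rho (Cmap A) (Cmap B) -> modD0 rho (A, a) (B, a)) /\
  (* Psi is a homomorphism: (C_A,a)(C_B,b) = (C_A C_{a.B}, ab) *)
  (forall (a b A B C : 'M[k]_n), inG rho F a -> inG rho F b ->
     inU rho A -> inU rho B -> inU rho C ->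
     autEq rho (Cmap C) (fun X => Cmap A (Cmap (actM rho a B) X)) ->
     modD0 rho (C, famM a b) (sdmul rho (A, a) (B, b))) /\
  (* Psi is injective *)
  (forall (a b A B : 'M[k]_n), inG rho F a -> inG rho F b ->
     inU rho A -> inU rho B -> modD0 rho (A, a) (B, b) ->
     autEq rho (Cmap A) (Cmap B) /\ a = b) /\
  (* Psi is surjective *)
  (forall x : 'M[k]_n * 'M[k]_n, inUT rho x ->
     exists (A a : 'M[k]_n), [/\ inU rho A, inG rho F a & modD0 rho (A, a) x]).
Proof.
have inG_inT (a : 'M[k]_n) : inG rho F a -> inT rho a by case/andP.
split.
  split; first by move=> x; apply: inD0_inUT.
  split; first exact: inD0_sdone.
  split; first by move=> x y; apply: inD0_sdmul.
  split; first by move=> x; apply: inD0_sdinv.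
  by move=> g x; apply: inD0_conj.
split; first by move=> a A B /inG_inT; apply: autEq_actM.
split; first by move=> a A B /inG_inT; apply: modD0_autEq.
split; first by move=> a b A B C /inG_inT Ta /inG_inT; apply: modD0_sdmul.
split; first by move=> a b A B; apply: modD0_inG_inj.
by move=> x; apply: modD0_inG_surj.
Qed.
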